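(* Let $\lambda\neq0$. For every positive integer $N$ and every integer $k\ge 0$, $$Bl_{k+N}(\lambda)=(-1)^N\lambda\sum_{i=1}^{N+1}a_{i-1}(N;\lambda)\sum_{l=0}^{k}\binom{k}{l}(-1)^l(N+l-1)_l\,Bl^{(i)}_{k-l}(\lambda).$$
   Context: $(x)_n=x(x-1)\cdots(x-n+1)$, $(x)_0=1$. The Boole numbers $Bl_n(\lambda)$ and higher-order Boole numbers $Bl_n^{(r)}(\lambda)$ ($r\in\mathbb{N}$) are defined by $\frac{1}{(1+t)^\lambda+1}=\sum_{n\ge0}Bl_n(\lambda)\frac{t^n}{n!}$ and $\left(\frac{1}{(1+t)^\lambda+1}\right)^r=\sum_{n\ge0}Bl_n^{(r)}(\lambda)\frac{t^n}{n!}$. The numbers $a_i(N;\lambda)$ are defined recursively by $a_0(0;\lambda)=1/\lambda$ and, for $N\ge0$: $a_0(N+1;\lambda)=(N+\lambda)a_0(N;\lambda)$, $a_{N+1}(N+1;\lambda)=-(N+1)\lambda a_N(N;\lambda)$, $a_k(N+1;\lambda)=-k\lambda a_{k-1}(N;\lambda)+(N+(k+1)\lambda)a_k(N;\lambda)$ for $1\le k\le N$; they are the coefficients for which $\left(\frac{d}{dt}\right)^N F=\frac{(-1)^N\lambda}{(1+t)^N}\sum_{i=1}^{N+1}a_{i-1}(N;\lambda)F^i$ with $F=\frac{1}{(1+t)^\lambda+1}$. *)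

(* Formal (exponential) power series over a field R of
   characteristic 0 (a numFieldType), represented by their EGF coefficient
   sequences nat -> R: a series sum_n f n t^n/n! is represented by f. *)
From HB Require Import structures.
From mathcomp Require Import all_boot all_order all_algebra.
Set Implicit Arguments. Unset Strict Implicit. Unset Printing Implicit Defensive.
Import Order.TTheory GRing.Theory Num.Theory.
Local Open Scope ring_scope.

Definition falling {R : ringType} (x : R) (n : nat) : R :=
  \prod_(i < n) (x - i%:R).

(* product of EGF coefficient sequences: coefficient sequence of the
   product of sum f_n t^n/n! and sum g_n t^n/n! *)
Definition egf_mul {R : ringType} (f g : nat -> R) : nat -> R :=
  fun n => \sum_(j < n.+1) 'C(n, j)%:R * f j * g (n - j)%N.

Definition egf_one {R : ringType} : nat -> R := fun n => (n == 0%N)%:R.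

Fixpoint egf_pow {R : ringType} (f : nat -> R) (r : nat) : nat -> R :=
  match r with
  | 0 => egf_one
  | r'.+1 => egf_mul f (egf_pow f r')
  end.

(* EGF coefficients of (1+t)^lambda + 1 : (1+t)^lambda = sum (lambda)_n t^n/n! *)
Definition boole_den {R : ringType} (lam : R) : nat -> R :=
  fun n => falling lam n + (n == 0%N)%:R.

(* The reciprocal of boole_den lam (constant term 2), computed by the
   standard power-series inversion recursion: the list of the first n+1
   EGF coefficients of 1/((1+t)^lambda+1). *)
Fixpoint boole_seq {R : numFieldType} (lam : R) (n : nat) : seq R :=
  match n with
  | 0 => [:: 2^-1]
  | n'.+1 =>
      let s := boole_seq lam n' in
      rcons s (- (\sum_(j < n'.+1) 'C(n'.+1, j)%:R * s`_j
                     * boole_den lam (n'.+1 - j)%N) / 2)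
  end.

Definition Bl {R : numFieldType} (lam : R) (n : nat) : R := (boole_seq lam n)`_n.

Definition Blr {R : numFieldType} (r : nat) (lam : R) (n : nat) : R :=
  egf_pow (Bl lam) r n.

(* a_k(N; lambda), as a function of N returning k |-> a_k(N;lambda)
   (value 0 outside 0 <= k <= N, never used). *)
Fixpoint acoef {R : numFieldType} (lam : R) (N : nat) : nat -> R :=
  match N with
  | 0 => fun k => if k == 0%N then lam^-1 else 0
  | N'.+1 =>
      let p := acoef lam N' in
      fun k =>
        if k == 0%N then (N'%:R + lam) * p 0%N
        else if k == N'.+1 then - (N'.+1%:R * lam) * p N'
        else if (k <= N')%N then
          - (k%:R * lam) * p k.-1 + (N'%:R + k.+1%:R * lam) * p k
        else 0
  end.

Lemma boole_inv_check {R : numFieldType} (lam : R) :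
  Bl lam 0 = 2^-1.
Proof. by []. Qed.

(* In the algebra of exponential generating functions the derivative is the
   shift of coefficients, so Bl_(k+N) is the k-th coefficient of F^(N) for
   F = 1/((1+t)^lam + 1).  Differentiating F ((1+t)^lam + 1) = 1 gives the
   Riccati equation (1+t) F' = lam (F^2 - F); hence (1+t) d/dt maps polynomials
   in F to polynomials in F, and induction on N yields
   (1+t)^N F^(N) = (-1)^N lam \sum_i a_(i-1)(N) F^i, the recursion defining the
   a_k being exactly the one produced by the induction step.  Multiplying by
   (1+t)^(-N) = \sum_l (-N)_l t^l/l!, with (-N)_l = (-1)^l (N+l-1)_l, and
   reading off the coefficient of t^k/k! gives the formula. *)

From HB Require Import structures.
From mathcomp Require Import all_boot all_order all_algebra.
From mathcomp Require Import boolp ring zify.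
Set Implicit Arguments.
Unset Strict Implicit.
Unset Printing Implicit Defensive.

Import Order.TTheory GRing.Theory Num.Theory.
Local Open Scope ring_scope.

Section FallingFactorial.
Variable R : comNzRingType.

Lemma falling0 (a : R) : falling a 0 = 1.
Proof. by rewrite /falling big_ord0. Qed.

Lemma fallingS (a : R) n : falling a n.+1 = falling a n * (a - n%:R).
Proof. by rewrite /falling big_ord_recr. Qed.

Lemma falling_nat_small m n : (m < n)%N -> falling (m%:R : R) n = 0.
Proof. by move=> mn; rewrite /falling (bigD1 (Ordinal mn)) //= subrr mul0r. Qed.

Lemma falling_oppn N l :
  falling (- (N%:R : R)) l = (-1) ^+ l * falling ((N + l).-1%:R) l.
Proof.
rewrite /falling [in RHS](reindex_inj rev_ord_inj) /=.
have -> : (-1 : R) ^+ l = \prod_(i < l) (-1) by rewrite prodr_const card_ord.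
rewrite -big_split /=; apply: eq_bigr => i _; have il := ltn_ord i.
by rewrite mulN1r -opprD -natrD -natrB; [congr (- _%:R)|]; lia.
Qed.

End FallingFactorial.

Section EGF.
Variable R : numFieldType.

Definition egf := nat -> R.
HB.instance Definition _ := gen_eqMixin egf.
HB.instance Definition _ := gen_choiceMixin egf.

Definition egf_add (f g : egf) : egf := fun n => f n + g n.
Definition egf_opp (f : egf) : egf := fun n => - f n.
Definition egf_zero : egf := fun _ => 0.
Definition egf_scale (c : R) (f : egf) : egf := fun n => c * f n.

Lemma egf_addA : associative egf_add.
Proof. by move=> f g h; apply: funext => n; apply: addrA. Qed.
Lemma egf_addC : commutative egf_add.
Proof. by move=> f g; apply: funext => n; apply: addrC. Qed.
Lemma egf_add0 : left_id egf_zero egf_add.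
Proof. by move=> f; apply: funext => n; apply: add0r. Qed.
Lemma egf_addN : left_inverse egf_zero egf_opp egf_add.
Proof. by move=> f; apply: funext => n; apply: addNr. Qed.

HB.instance Definition _ :=
  GRing.isZmodule.Build egf egf_addA egf_addC egf_add0 egf_addN.

Lemma egf_scaleA a b f : egf_scale a (egf_scale b f) = egf_scale (a * b) f.
Proof. by apply: funext => n; apply: mulrA. Qed.
Lemma egf_scale1 : left_id 1 egf_scale.
Proof. by move=> f; apply: funext => n; apply: mul1r. Qed.
Lemma egf_scaleDr : right_distributive egf_scale +%R.
Proof. by move=> c f g; apply: funext => n; apply: mulrDr. Qed.
Lemma egf_scaleDl f : {morph egf_scale^~ f : a b / a + b}.
Proof. by move=> a b; apply: funext => n; apply: mulrDl. Qed.

HB.instance Definition _ :=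
  GRing.Zmodule_isLmodule.Build R egf egf_scaleA egf_scale1 egf_scaleDr egf_scaleDl.

Lemma egf_addE (f g : egf) n : (f + g) n = f n + g n. Proof. by []. Qed.
Lemma egf_scaleE c (f : egf) n : (c *: f) n = c * f n. Proof. by []. Qed.
(* Dividing the n-th coefficient by n! turns the binomial convolution egf_mul
   into the Cauchy product, whose algebraic laws are read off products of
   truncated polynomials. *)
Definition to_ogf (f : egf) : egf := fun n => f n / n`!%:R.
Definition ogf_mul (a b : egf) : egf := fun n => \sum_(j < n.+1) a j * b (n - j)%N.
Definition trunc_poly m (a : egf) : {poly R} := \poly_(i < m) a i.

Lemma fact_natr_neq0 n : (n`!%:R : R) != 0.
Proof. by rewrite pnatr_eq0 -lt0n fact_gt0. Qed.

Lemma to_ogf_inj : injective to_ogf.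
Proof.
move=> f g fg; apply: funext => n; have /(congr1 ( *%R^~ n`!%:R)) := congr1 (@^~ n) fg.
by rewrite /to_ogf !divfK ?fact_natr_neq0.
Qed.

Lemma to_ogf_mul f g : to_ogf (egf_mul f g) = ogf_mul (to_ogf f) (to_ogf g).
Proof.
apply: funext => n; rewrite /to_ogf /egf_mul /ogf_mul mulr_suml.
apply: eq_bigr => j _; have jn : (j <= n)%N by rewrite -ltnS.
rewrite -(bin_fact jn) !natrM; field.
by rewrite !fact_natr_neq0 pnatr_eq0 -lt0n bin_gt0 jn.
Qed.

Lemma ogf_mul_trunc {m} a b {n} :
  (n < m)%N -> ogf_mul a b n = (trunc_poly m a * trunc_poly m b)`_n.
Proof.
move=> nm; rewrite coefM /ogf_mul; apply: eq_bigr => j _.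
by rewrite !coef_poly !(leq_ltn_trans _ nm) ?leq_subr // -ltnS.
Qed.

Lemma coefM_trunc {m n} {p q : {poly R}} r : (n < m)%N ->
  (forall i, (i < m)%N -> p`_i = q`_i) -> (r * p)`_n = (r * q)`_n.
Proof.
move=> nm pq; rewrite !coefM; apply: eq_bigr => j _; rewrite pq //.
exact: leq_ltn_trans (leq_subr _ _) nm.
Qed.

Lemma trunc_ogf_mul {m} a b i :
  (i < m)%N -> (trunc_poly m (ogf_mul a b))`_i = (trunc_poly m a * trunc_poly m b)`_i.
Proof. by move=> im; rewrite coef_poly im (ogf_mul_trunc _ _ im). Qed.

Lemma ogf_mulC : commutative ogf_mul.
Proof.
by move=> a b; apply: funext => n; rewrite !(ogf_mul_trunc _ _ (ltnSn n)) mulrC.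
Qed.

Lemma ogf_mulA : associative ogf_mul.
Proof.
move=> a b c; apply: funext => n; have nm := ltnSn n.
rewrite !(ogf_mul_trunc _ _ nm) (coefM_trunc _ nm (trunc_ogf_mul b c)).
rewrite [in RHS]mulrC (coefM_trunc _ nm (trunc_ogf_mul a b)).
by rewrite mulrA [trunc_poly _ c * _]mulrC.
Qed.

Lemma egf_mulA : associative (@egf_mul R).
Proof. by move=> f g h; apply: to_ogf_inj; rewrite !to_ogf_mul ogf_mulA. Qed.

Lemma egf_mulC : commutative (@egf_mul R).
Proof. by move=> f g; apply: to_ogf_inj; rewrite !to_ogf_mul ogf_mulC. Qed.

Lemma egf_mul1 : left_id (@egf_one R) egf_mul.
Proof.
move=> f; apply: funext => n; rewrite /egf_mul big_ord_recl big1 ?addr0.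
  by rewrite /egf_one bin0 subn0 !mul1r.
by move=> j _; rewrite /egf_one mulr0 mul0r.
Qed.

Lemma egf_mulDl : left_distributive (@egf_mul R) egf_add.
Proof.
move=> f g h; apply: funext => n; rewrite /egf_mul /egf_add -big_split /=.
by apply: eq_bigr => j _; rewrite mulrDr mulrDl.
Qed.

Lemma egf_one_neq0 : egf_one != egf_zero.
Proof. by apply/eqP => /(congr1 (@^~ 0%N)) /eqP; rewrite oner_eq0. Qed.

HB.instance Definition _ :=
  GRing.Zmodule_isComNzRing.Build egf egf_mulA egf_mulC egf_mul1 egf_mulDl egf_one_neq0.

Lemma egf_scaleAl c (f g : egf) : c *: (f * g) = (c *: f) * g.
Proof.
apply: funext => n; rewrite egf_scaleE mulr_sumr.
by apply: eq_bigr => j _; rewrite egf_scaleE !mulrA [c * _]mulrC.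
Qed.

HB.instance Definition _ := GRing.Lmodule_isLalgebra.Build R egf egf_scaleAl.
HB.instance Definition _ := GRing.Lalgebra_isComAlgebra.Build R egf.

Lemma egf_mulE (f g : egf) n :
  (f * g) n = \sum_(j < n.+1) 'C(n, j)%:R * f j * g (n - j)%N.
Proof. by []. Qed.

Lemma egf_sumE (I : Type) (r : seq I) (P : pred I) (F : I -> egf) n :
  (\sum_(i <- r | P i) F i) n = \sum_(i <- r | P i) F i n.
Proof. exact: (big_morph (@^~ n) (fun f g => egf_addE f g n)). Qed.

Lemma egf_powE (f : egf) i : egf_pow f i = f ^+ i.
Proof. by elim: i => [|i IH] //=; rewrite exprS -IH. Qed.

Definition egf_deriv (f : egf) : egf := fun n => f n.+1.

Lemma egf_deriv_is_linear : linear egf_deriv.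
Proof. by []. Qed.

HB.instance Definition _ :=
  GRing.isLinear.Build R egf egf *:%R egf_deriv egf_deriv_is_linear.

Lemma egf_deriv1 : egf_deriv 1 = 0.
Proof. by []. Qed.

Lemma egf_derivM f g : egf_deriv (f * g) = egf_deriv f * g + f * egf_deriv g.
Proof.
apply: funext => n; rewrite egf_addE /egf_deriv !egf_mulE big_ord_recl.
under eq_bigr => i _ do rewrite lift0 binS subSS natrD !mulrDl.
rewrite big_split /= addrA addrC; congr (_ + _).
rewrite big_ord_recr [RHS]big_ord_recl /= (bin_small (ltnSn n)) !mul0r addr0.
rewrite !bin0 !subn0 /bump /=.
by congr (_ + _); apply: eq_bigr => i _; rewrite add1n subnSK.
Qed.

Lemma egf_derivXn f i : egf_deriv (f ^+ i.+1) = i.+1%:R * f ^+ i * egf_deriv f.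
Proof.
elim: i => [|i IH]; first by rewrite expr1 expr0 mulr1 mul1r.
by rewrite exprS egf_derivM IH exprS; ring.
Qed.

Lemma egf_deriv_mulr_eq1 f g : f * g = 1 -> egf_deriv f = - (f ^+ 2 * egf_deriv g).
Proof.
move=> fg1; have /eqP := congr1 egf_deriv fg1.
rewrite egf_derivM egf_deriv1 addr_eq0 => /eqP /(congr1 ( *%R f)).
by rewrite mulrCA fg1 mulr1 => ->; rewrite mulrN expr2 mulrA.
Qed.

Lemma iter_egf_derivE N f n : iter N egf_deriv f n = f (n + N)%N.
Proof. by elim: N n => [|N IH] n; rewrite ?addn0 //= /egf_deriv IH addSnnS. Qed.

(* (1+t)^a; in particular egf_binom 1 is 1 + t. *)
Definition egf_binom (a : R) : egf := fun n => falling a n.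

Lemma egf_binom1_mul0 g : (egf_binom 1 * g) 0 = g 0.
Proof. by rewrite egf_mulE big_ord1 /egf_binom falling0 !mul1r. Qed.

Lemma egf_binom1_mulS g n : (egf_binom 1 * g) n.+1 = g n.+1 + n.+1%:R * g n.
Proof.
rewrite egf_mulE 2!big_ord_recl big1 ?addr0 /=; last first.
  by move=> j _; rewrite /egf_binom (@falling_nat_small _ 1) // mulr0 mul0r.
by rewrite /egf_binom bin0 bin1 fallingS !falling0 subr0 !mul1r mulr1 subn1.
Qed.

Lemma egf_binom_ode a : egf_binom 1 * egf_deriv (egf_binom a) = a *: egf_binom a.
Proof.
apply: funext => -[|n]; rewrite egf_scaleE ?egf_binom1_mul0 ?egf_binom1_mulS.
  by rewrite /egf_deriv /egf_binom fallingS falling0 subr0 mul1r mulr1.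
by rewrite /egf_deriv /egf_binom fallingS; ring.
Qed.

Lemma egf_binom_ode_uniq (g : egf) c :
  g 0 = 1 -> egf_binom 1 * egf_deriv g = c *: g -> g = egf_binom c.
Proof.
move=> g0 ode; apply: funext; elim=> [|n IH]; first by rewrite g0 /egf_binom falling0.
have := congr1 (@^~ n) ode; rewrite egf_scaleE /egf_deriv.
case: n IH => [|n] IH.
  rewrite egf_binom1_mul0 IH => ->.
  by rewrite /egf_binom fallingS falling0 subr0 mul1r mulr1.
rewrite egf_binom1_mulS IH /egf_binom => /(canRL (addrK _)) ->.
by rewrite [falling c n.+2]fallingS; ring.
Qed.

Lemma egf_binomD a b : egf_binom a * egf_binom b = egf_binom (a + b).
Proof.
apply: egf_binom_ode_uniq.
  by rewrite egf_mulE big_ord1 /egf_binom !falling0 !mulr1.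
by rewrite egf_derivM mulrDr mulrA egf_binom_ode mulrCA egf_binom_ode
  -scalerAl -scalerAr -scalerDl.
Qed.

Lemma egf_binom0 : egf_binom 0 = 1.
Proof.
apply: funext => -[|n]; rewrite /egf_binom ?falling0 //.
by rewrite (@falling_nat_small _ 0).
Qed.

Lemma egf_binom_natr N : egf_binom N%:R = egf_binom 1 ^+ N.
Proof.
elim: N => [|N IH]; first by rewrite egf_binom0.
by rewrite exprS -IH egf_binomD -natr1 addrC.
Qed.

Lemma egf_binom_oppn_mul N : egf_binom (- N%:R) * egf_binom 1 ^+ N = 1.
Proof. by rewrite -egf_binom_natr egf_binomD addNr egf_binom0. Qed.

Lemma egf_binom1X_deriv N f :
  egf_binom 1 ^+ N.+1 * egf_deriv f =
  egf_binom 1 * egf_deriv (egf_binom 1 ^+ N * f) - N%:R *: (egf_binom 1 ^+ N * f).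
Proof.
rewrite egf_derivM mulrDr mulrA -[X in egf_binom 1 * egf_deriv X]egf_binom_natr.
by rewrite egf_binom_ode egf_binom_natr -scalerAl addrAC subrr add0r exprS mulrA.
Qed.

End EGF.

Arguments egf_deriv {R}.

Section BooleNumbers.
Variables (R : numFieldType) (lam : R).

Definition Bl_egf : egf R := Bl lam.
Local Notation F := Bl_egf.

Lemma size_boole_seq n : size (boole_seq lam n) = n.+1.
Proof. by elim: n => [|n IH] //=; rewrite size_rcons IH. Qed.

Lemma nth_boole_seq n j : (j <= n)%N -> (boole_seq lam n)`_j = Bl lam j.
Proof.
elim: n => [|n IH]; first by rewrite leqn0 => /eqP ->.
rewrite leq_eqVlt => /orP [/eqP -> //|jn].
by rewrite /= nth_rcons size_boole_seq jn IH.
Qed.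

Lemma BlS n : Bl lam n.+1 =
  - (\sum_(j < n.+1) 'C(n.+1, j)%:R * Bl lam j * boole_den lam (n.+1 - j)%N) / 2.
Proof.
rewrite {1}/Bl /= nth_rcons size_boole_seq ltnn eqxx; congr (- _ / _).
by apply: eq_bigr => j _; rewrite nth_boole_seq // -ltnS.
Qed.

Lemma Bl_mul_den : F * (egf_binom lam + 1) = 1.
Proof.
have two_neq0 : (2 : R) != 0 by rewrite pnatr_eq0.
have -> : egf_binom lam + 1 = boole_den lam :> egf R by [].
apply: funext => -[|n]; rewrite egf_mulE /= /egf_one /=.
  by rewrite big_ord1 /= /F /Bl /= /boole_den falling0 bin0 mul1r mulVf.
rewrite big_ord_recr /= binn subnn /F BlS /boole_den falling0.
by rewrite mul1r divfK // subrr.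
Qed.

Lemma Bl_ode : egf_binom 1 * egf_deriv F = lam *: (F ^+ 2 - F).
Proof.
have FP : F * egf_binom lam = 1 - F by rewrite -Bl_mul_den mulrDr mulr1 addrK.
rewrite (egf_deriv_mulr_eq1 Bl_mul_den) raddfD /= egf_deriv1 addr0 mulrN mulrCA.
rewrite egf_binom_ode -scalerAr expr2 -mulrA FP mulrBr mulr1 -expr2.
by rewrite -scalerN opprB.
Qed.

Lemma Bl_ode_pow i :
  egf_binom 1 * egf_deriv (F ^+ i.+1) = (lam * i.+1%:R) *: (F ^+ i.+2 - F ^+ i.+1).
Proof.
rewrite egf_derivXn mulrCA Bl_ode -scalerAr -scalerA scaler_nat.
by congr (_ *: _); rewrite !exprS; ring.
Qed.

Lemma Bl_ode_series (c : nat -> R) n : c n = 0 ->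
  egf_binom 1 * egf_deriv (\sum_(i < n) c i *: F ^+ i.+1) =
  \sum_(i < n.+1) (lam * (i%:R * c i.-1 - i.+1%:R * c i)) *: F ^+ i.+1.
Proof.
move=> cn0; rewrite linear_sum mulr_sumr.
under eq_bigr => i _ do rewrite linearZ -scalerAr Bl_ode_pow scalerA scalerBr.
rewrite sumrB; under [RHS]eq_bigr => i _ do rewrite mulrBr scalerBl.
rewrite sumrB big_ord_recl big_ord_recr /= cn0 !(mul0r, mulr0, scale0r, add0r, addr0).
by congr (_ - _); apply: eq_bigr => i _;
  rewrite /bump ?leq0n ?add1n ?add0n; congr (_ *: _); ring.
Qed.

Lemma acoef_gt N k : (N < k)%N -> acoef lam N k = 0.
Proof.
elim: N k => [|N IH] k /=; first by case: k.
move=> Nk; rewrite (gtn_eqF (leq_trans _ Nk)) // (gtn_eqF Nk).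
by rewrite leqNgt (ltnW Nk).
Qed.

Lemma acoefS N k : (k <= N.+1)%N -> acoef lam N.+1 k =
  - (k%:R * lam) * acoef lam N k.-1 + (N%:R + k.+1%:R * lam) * acoef lam N k.
Proof.
case: k => [|k] kN /=; first by rewrite mul0r oppr0 mul0r add0r mul1r.
case: eqP => [[->]|/eqP kN1]; first by rewrite (@acoef_gt N N.+1) // mulr0 addr0.
by rewrite -ltnS ltn_neqAle kN1 kN.
Qed.

Definition acoef_series N : egf R := \sum_(i < N.+1) acoef lam N i *: F ^+ i.+1.

Lemma acoef_seriesS N : acoef_series N.+1 =
  N%:R *: acoef_series N - egf_binom 1 * egf_deriv (acoef_series N).
Proof.
have extend : acoef_series N = \sum_(i < N.+2) acoef lam N i *: F ^+ i.+1.
  by rewrite /acoef_series [RHS]big_ord_recr /= acoef_gt // scale0r addr0.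
rewrite Bl_ode_series ?acoef_gt // extend [LHS]/acoef_series scaler_sumr -sumrB.
apply: eq_bigr => i _; rewrite (@acoefS N i (ltn_ord i)) scalerA -scalerBl.
by congr (_ *: _); ring.
Qed.

Lemma Bl_iter_deriv N : lam != 0 ->
  egf_binom 1 ^+ N * iter N egf_deriv F = ((-1) ^+ N * lam) *: acoef_series N.
Proof.
move=> lam0; elim: N => [|N IH].
  by rewrite /acoef_series big_ord1 /= !expr0 !mul1r scalerA mulfV // scale1r expr1.
rewrite iterS egf_binom1X_deriv IH linearZ /= -scalerAr acoef_seriesS.
rewrite exprS mulN1r mulNr scaleNr -scalerN opprB scalerBr.
by congr (_ - _); rewrite !scalerA mulrC.
Qed.

End BooleNumbers.

Unset Implicit Arguments.

Theorem theorem3 (R : numFieldType) (lam : R) (N k : nat) :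
  lam != 0 -> (0 < N)%N ->
  Bl lam (k + N) =
    (-1) ^+ N * lam *
    \sum_(1 <= i < N.+2)
      acoef lam N i.-1 *
      \sum_(0 <= l < k.+1)
        'C(k, l)%:R * (-1) ^+ l * falling ((N + l).-1%:R : R) l
        * Blr i lam (k - l)%N.
Proof.
move=> lam0 _.
rewrite -[Bl lam _](iter_egf_derivE N (Bl_egf lam)) -[iter _ _ _]mul1r.
rewrite -(egf_binom_oppn_mul R N) -mulrA Bl_iter_deriv // egf_mulE mulr_sumr.
rewrite big_add1 /= !big_mkord.
under [RHS]eq_bigr => i _ do rewrite !mulr_sumr.
rewrite [RHS]exchange_big /= big_mkord; apply: eq_bigr => l _.
rewrite egf_scaleE /acoef_series egf_sumE !mulr_sumr; apply: eq_bigr => i _.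
by rewrite egf_scaleE /Blr egf_powE /egf_binom falling_oppn; ring.
Qed.
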